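(* Let $\mathcal{H}$ be a Hilbert space, $\mathcal{H}_1$ a closed subspace with $\{0\}\ne\mathcal{H}_1\ne\mathcal{H}$, $P:\mathcal{H}\to\mathcal{H}_1$ the orthogonal projection onto $\mathcal{H}_1$ (so $P^*:\mathcal{H}_1\to\mathcal{H}$ is the inclusion), $Q:\mathcal{H}\to\mathcal{H}_1^\perp$ the orthogonal projection onto $\mathcal{H}_1^\perp$, $H\ge 0$ a bounded selfadjoint operator on $\mathcal{H}$, and $H_t:=H+tQ^*Q$ for $t\ge0$. Then for $t\ge 2\|H+1\|^2$, $$\left\|(H_t+1)^{-1}-P^*(PHP^*+1)^{-1}P\right\|\le \frac{4\|H+1\|^2}{1+t}.$$ *)

From HB Require Import structures.
From mathcomp Require Import all_boot all_order all_algebra.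
From mathcomp Require Import all_classical all_reals.
From mathcomp Require Export complex.
Set Implicit Arguments. Unset Strict Implicit. Unset Printing Implicit Defensive.
Import Order.TTheory GRing.Theory Num.Theory.
Local Open Scope ring_scope.
Local Open Scope classical_set_scope.

Record is_inner_product (R : realType) (V : lmodType R[i])
    (ip : V -> V -> R[i]) : Prop := {
  ip_linear : forall (a : R[i]) (x y z : V), ip (a *: x + y) z = a * ip x z + ip y z;
  ip_conj   : forall x y : V, ip y x = conjc (ip x y);
  ip_ge0    : forall x : V, 0 <= ip x x;
  ip_def    : forall x : V, ip x x = 0 -> x = 0 }.

Definition inorm (R : realType) (V : lmodType R[i]) (ip : V -> V -> R[i])
  (x : V) : R := Num.sqrt (complex.Re (ip x x)).

Definition is_complete (R : realType) (V : lmodType R[i]) (ip : V -> V -> R[i]) : Prop :=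
  forall u : nat -> V,
    (forall e : R, 0 < e -> exists N : nat, forall m n : nat, (N <= m)%N -> (N <= n)%N ->
        inorm ip (u m - u n) < e) ->
    exists l : V, forall e : R, 0 < e -> exists N : nat, forall n : nat, (N <= n)%N ->
        inorm ip (u n - l) < e.

Definition is_hilbert (R : realType) (V : lmodType R[i]) (ip : V -> V -> R[i]) : Prop :=
  is_inner_product ip /\ is_complete ip.

Definition bounded_op (R : realType) (V W : lmodType R[i])
  (ipV : V -> V -> R[i]) (ipW : W -> W -> R[i]) (f : V -> W) : Prop :=
  exists M : R, forall x : V, inorm ipW (f x) <= M * inorm ipV x.

Definition opnorm (R : realType) (V W : lmodType R[i])
  (ipV : V -> V -> R[i]) (ipW : W -> W -> R[i]) (f : V -> W) : R :=
  sup [set inorm ipW (f x) | x in [set x : V | inorm ipV x <= 1]].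

Definition is_adjoint (R : realType) (V W : lmodType R[i])
  (ipV : V -> V -> R[i]) (ipW : W -> W -> R[i]) (f : V -> W) (g : W -> V) : Prop :=
  forall (x : V) (y : W), ipW (f x) y = ipV x (g y).

Definition is_isometry (R : realType) (V W : lmodType R[i])
  (ipV : V -> V -> R[i]) (ipW : W -> W -> R[i]) (f : V -> W) : Prop :=
  forall x y : V, ipW (f x) (f y) = ipV x y.

(* Write u = (H_t + 1)^-1 x and split u = P^* P u + Q^* Q u.  Positivity of
   H_t gives |u| <= |x|.  The Q-component of (H_t + 1) u = x reads
   (1 + t) Q u = Q (x - H u), so |Q u| = O(|x| / (1 + t)).  The P-component
   gives P u - (P H P^* + 1)^-1 P x = - (P H P^* + 1)^-1 P H Q^* Q u, and the
   resolvent of the positive operator P H P^* is a contraction, so this is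
   O(|Q u|) as well.  With a = ||H + 1|| one has ||H|| <= a and a >= 1, and the
   constants combine to (1 + t)^2 |u - P^* (P H P^* + 1)^-1 P x|^2
   <= 2 (1 + a^2)^2 |x|^2 <= 16 a^4 |x|^2. *)

From HB Require Import structures.
From mathcomp Require Import all_boot all_order all_algebra.
From mathcomp Require Import all_classical all_reals.
From mathcomp Require Import complex lra.
Import Order.TTheory GRing.Theory Num.Theory.
Set Implicit Arguments. Unset Strict Implicit.
Local Open Scope ring_scope.
Local Open Scope complex_scope.
Local Notation Re := complex.Re.

Lemma Re_conjc (R : rcfType) (z : R[i]) : Re z^* = Re z.
Proof. by case: z. Qed.

Lemma Re_ge0 (R : rcfType) (z : R[i]) : 0 <= z -> 0 <= Re z.
Proof. by rewrite lecE => /andP[]. Qed.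

Section InnerProduct.
Variables (R : realType) (V : lmodType R[i]) (ip : V -> V -> R[i]).
Hypothesis hip : is_inner_product ip.

Lemma ipD x y z : ip (x + y) z = ip x z + ip y z.
Proof. by have := ip_linear hip 1 x y z; rewrite scale1r mul1r. Qed.

Lemma ip0 z : ip 0 z = 0.
Proof. by apply: (addrI (ip 0 z)); rewrite -ipD !addr0. Qed.

Lemma ipZ a x z : ip (a *: x) z = a * ip x z.
Proof. by have := ip_linear hip a x 0 z; rewrite !addr0 ip0 addr0. Qed.

Lemma ipN x z : ip (- x) z = - ip x z.
Proof. by rewrite -scaleN1r ipZ mulN1r. Qed.

Lemma ipB x y z : ip (x - y) z = ip x z - ip y z.
Proof. by rewrite ipD ipN. Qed.

Lemma ipDr x y z : ip z (x + y) = ip z x + ip z y.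
Proof. by rewrite (ip_conj hip (x + y)) ipD rmorphD /= -!(ip_conj hip). Qed.

Lemma ipNr x z : ip z (- x) = - ip z x.
Proof. by rewrite (ip_conj hip (- x)) ipN rmorphN /= -(ip_conj hip). Qed.

Lemma ipZr a x z : ip z (a *: x) = a^* * ip z x.
Proof. by rewrite (ip_conj hip (a *: x)) ipZ rmorphM /= -(ip_conj hip). Qed.

Lemma Re_ipC x y : Re (ip y x) = Re (ip x y).
Proof. by rewrite (ip_conj hip x) Re_conjc. Qed.

Definition sqnorm x := Re (ip x x).

Lemma sqnorm_ge0 x : 0 <= sqnorm x.
Proof. exact/Re_ge0/(ip_ge0 hip). Qed.

Lemma sqnorm_eq0 x : sqnorm x = 0 -> x = 0.
Proof.
move=> x0; apply: (ip_def hip); apply/eqP.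
by rewrite eq_complex -/(sqnorm x) x0 (ger0_Im (ip_ge0 hip x)) !eqxx.
Qed.

Lemma sqnorm0 : sqnorm 0 = 0.
Proof. by rewrite /sqnorm ip0. Qed.

Lemma sqnormN x : sqnorm (- x) = sqnorm x.
Proof. by rewrite /sqnorm ipN ipNr opprK. Qed.

Lemma sqnormD x y : sqnorm (x + y) = sqnorm x + sqnorm y + 2 * Re (ip x y).
Proof. by rewrite /sqnorm ipD !ipDr !raddfD /= (Re_ipC x y); lra. Qed.

Lemma sqnormZ (r : R) x : sqnorm (r%:C *: x) = r ^+ 2 * sqnorm x.
Proof. by rewrite /sqnorm ipZ ipZr; case: (ip x x) => a b /=; lra. Qed.

Lemma Re_ip_le x y : 2 * Re (ip x y) <= sqnorm x + sqnorm y.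
Proof.
have := sqnorm_ge0 (x - y).
by rewrite sqnormD sqnormN ipNr raddfN /=; lra.
Qed.

Lemma sqnormD_le x y : sqnorm (x + y) <= 2 * sqnorm x + 2 * sqnorm y.
Proof. by have := Re_ip_le x y; rewrite sqnormD; lra. Qed.

Lemma sqnormD_ge x y :
  0 <= Re (ip x y) -> sqnorm x + sqnorm y <= sqnorm (x + y).
Proof. by rewrite sqnormD; lra. Qed.

Lemma inorm_ge0 x : 0 <= inorm ip x.
Proof. exact: sqrtr_ge0. Qed.

Lemma inorm_sqr x : inorm ip x ^+ 2 = sqnorm x.
Proof. exact/sqr_sqrtr/sqnorm_ge0. Qed.

Lemma inorm0 : inorm ip 0 = 0.
Proof. by rewrite /inorm -/(sqnorm 0) sqnorm0 sqrtr0. Qed.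

Lemma inorm_le x c : 0 <= c -> (inorm ip x <= c) = (sqnorm x <= c ^+ 2).
Proof. by move=> c0; rewrite -ler_sqr ?inorm_sqr // nnegrE inorm_ge0. Qed.

End InnerProduct.

Section OperatorNorm.
Variables (R : realType) (V W : lmodType R[i]).
Variables (ipV : V -> V -> R[i]) (ipW : W -> W -> R[i]).
Hypotheses (hipV : is_inner_product ipV) (hipW : is_inner_product ipW).

Lemma inorm_le_sqnorm (x : W) (y : V) c :
  inorm ipW x <= c * inorm ipV y -> sqnorm ipW x <= c ^+ 2 * sqnorm ipV y.
Proof.
move=> xy; have c0 : 0 <= c * inorm ipV y := le_trans (inorm_ge0 ipW x) xy.
by move: xy; rewrite (inorm_le hipW) // exprMn (inorm_sqr hipV).
Qed.

Lemma bounded_op_id : bounded_op ipV ipV id.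
Proof. by exists 1 => x; rewrite mul1r. Qed.

Lemma bounded_opD (f g : V -> W) :
  bounded_op ipV ipW f -> bounded_op ipV ipW g ->
  bounded_op ipV ipW (fun x => f x + g x).
Proof.
move=> [M hM] [N hN]; exists (Num.sqrt (2 * M ^+ 2 + 2 * N ^+ 2)) => x.
rewrite (inorm_le hipW) ?mulr_ge0 ?sqrtr_ge0 ?inorm_ge0 //.
have MN0 : 0 <= 2 * M ^+ 2 + 2 * N ^+ 2.
  by have := sqr_ge0 M; have := sqr_ge0 N; lra.
rewrite exprMn sqr_sqrtr // (inorm_sqr hipV).
have := inorm_le_sqnorm (hM x); have := inorm_le_sqnorm (hN x).
by have := sqnormD_le hipW (f x) (g x); lra.
Qed.

Variable f : V -> W.
Hypothesis hfb : bounded_op ipV ipW f.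

Lemma opnorm_ub x : inorm ipV x <= 1 -> inorm ipW (f x) <= opnorm ipV ipW f.
Proof.
move=> x1; apply: ub_le_sup; last by exists x.
have [M hM] := hfb; exists `|M| => _ [y y1 <-].
apply: le_trans (hM y) _; apply: le_trans (ler_norm _) _.
by rewrite normrM ler_piMr // ger0_norm ?inorm_ge0.
Qed.

Lemma opnorm_ge0 : 0 <= opnorm ipV ipW f.
Proof.
have x1 : inorm ipV 0 <= 1 by rewrite inorm0.
exact: le_trans (inorm_ge0 ipW (f 0)) (opnorm_ub x1).
Qed.

Hypothesis hfZ : forall (r : R) x, f (r%:C *: x) = r%:C *: f x.

Lemma sqnorm_opnorm x :
  sqnorm ipW (f x) <= opnorm ipV ipW f ^+ 2 * sqnorm ipV x.
Proof.
have [x0|x0] := eqVneq (sqnorm ipV x) 0.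
  have f0 : f 0 = 0.
    by rewrite -(scale0r 0) -(rmorph0 (real_complex R)) hfZ scale0r.
  by rewrite x0 (sqnorm_eq0 hipV x0) f0 sqnorm0 // mulr0.
have s0 : 0 < inorm ipV x.
  by rewrite sqrtr_gt0 lt_def x0 sqnorm_ge0.
set z := (inorm ipV x)^-1%:C *: x.
have z1 : inorm ipV z <= 1.
  by rewrite inorm_le // sqnormZ // -inorm_sqr // -exprMn mulVf ?gt_eqF.
have := opnorm_ub z1; rewrite inorm_le ?opnorm_ge0 // hfZ sqnormZ //.
rewrite -(inorm_sqr hipV) exprVn -ler_pdivlMl ?invr_gt0 ?exprn_gt0 //.
by rewrite invrK mulrC.
Qed.

End OperatorNorm.

Lemma opnorm_le (R : realType) (V W : lmodType R[i]) (ipV : V -> V -> R[i])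
    (ipW : W -> W -> R[i]) (f : V -> W) (c : R) :
  is_inner_product ipV -> is_inner_product ipW -> 0 <= c ->
  (forall x, sqnorm ipW (f x) <= c ^+ 2 * sqnorm ipV x) ->
  opnorm ipV ipW f <= c.
Proof.
move=> hipV hipW c0 hf; apply: ge_sup; first by exists (inorm ipW (f 0)), 0;
  rewrite //= inorm0.
move=> _ [x x1 <-]; rewrite (inorm_le hipW) //.
apply: le_trans (hf x) _; rewrite -[leRHS]mulr1 ler_wpM2l ?sqr_ge0 //.
by move: x1; rewrite /= inorm_le // expr1n.
Qed.

Section Resolvent.
Variables (R : realType) (W : lmodType R[i]) (ipW : W -> W -> R[i]).
Hypothesis hipW : is_inner_product ipW.
Variables (T S : W -> W).
Hypothesis hS : forall k, T (S k) + S k = k.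

Lemma resolvent_contraction :
  (forall y, 0 <= Re (ipW (T y) y)) ->
  forall k, sqnorm ipW (S k) <= sqnorm ipW k.
Proof.
move=> hT k; rewrite -{2}(hS k).
by have := sqnormD_ge hipW (hT (S k)); have := sqnorm_ge0 hipW (T (S k)); lra.
Qed.

Lemma resolventB :
  {morph T : x y / x - y} -> (forall k, S (T k + k) = k) ->
  forall c d, S c - S d = S (c - d).
Proof.
move=> hTB hS' c d; have e : T (S c - S d) + (S c - S d) = c - d.
  by rewrite hTB addrACA -opprD !hS.
by rewrite -e hS'.
Qed.

End Resolvent.

Lemma adjoint_isometryK (R : realType) (V W : lmodType R[i])
    (ipV : V -> V -> R[i]) (ipW : W -> W -> R[i]) (f : V -> W) (g : W -> V) :
  is_inner_product ipV -> is_isometry ipV ipW f -> is_adjoint ipW ipV g f ->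
  cancel f g.
Proof.
move=> hipV hf hg v; apply/eqP; rewrite -subr_eq0; apply/eqP.
by apply: (ip_def hipV); rewrite (ipB hipV) hg hf subrr.
Qed.

Lemma adjoint_eq0 (R : realType) (V W : lmodType R[i])
    (ipV : V -> V -> R[i]) (ipW : W -> W -> R[i]) (f : V -> W) (g : W -> V) w :
  is_inner_product ipV -> is_adjoint ipW ipV g f ->
  (forall v, ipW w (f v) = 0) -> g w = 0.
Proof. by move=> hipV hg hw; apply: (ip_def hipV); rewrite hg hw. Qed.

Section OrthogonalDecomposition.
Variables (R : realType) (V K L : lmodType R[i]).
Variables (ip : V -> V -> R[i]) (ipK : K -> K -> R[i]) (ipL : L -> L -> R[i]).
Hypotheses (hip : is_inner_product ip) (hipK : is_inner_product ipK)
  (hipL : is_inner_product ipL).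
Variables (J : {linear K -> V}) (P : {linear V -> K}).
Variables (Jq : {linear L -> V}) (Q : {linear V -> L}).
Hypotheses (hJ : is_isometry ipK ip J) (hP : is_adjoint ip ipK P J).
Hypotheses (hJq : is_isometry ipL ip Jq) (hQ : is_adjoint ip ipL Q Jq).
Hypothesis hJqrange :
  forall x : V, (exists l : L, x = Jq l) <-> (forall k : K, ip x (J k) = 0).

Lemma ip_Jq_J l k : ip (Jq l) (J k) = 0.
Proof. by apply: (proj1 (hJqrange (Jq l))); exists l. Qed.

Lemma ip_J_Jq k l : ip (J k) (Jq l) = 0.
Proof. by rewrite (ip_conj hip) ip_Jq_J conjc0. Qed.

Lemma PJ : cancel J P. Proof. exact: adjoint_isometryK hipK hJ hP. Qed.
Lemma QJq : cancel Jq Q. Proof. exact: adjoint_isometryK hipL hJq hQ. Qed.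
Lemma QJ k : Q (J k) = 0. Proof. exact: adjoint_eq0 hipL hQ (ip_J_Jq k). Qed.
Lemma PJq l : P (Jq l) = 0. Proof. exact: adjoint_eq0 hipK hP (ip_Jq_J l). Qed.

Lemma decompose x : x = J (P x) + Jq (Q x).
Proof.
have [l hl] : exists l, x - J (P x) = Jq l.
  by apply/hJqrange => k; rewrite (ipB hip) hJ hP subrr.
have : Q (x - J (P x)) = l by rewrite hl QJq.
by rewrite linearB /= QJ subr0 => ->; rewrite -hl addrC subrK.
Qed.

Lemma sqnorm_JDJq k l : sqnorm ip (J k + Jq l) = sqnorm ipK k + sqnorm ipL l.
Proof. by rewrite (sqnormD hip) ip_J_Jq mulr0 addr0 /sqnorm hJ hJq. Qed.

Lemma sqnormP_le x : sqnorm ipK (P x) <= sqnorm ip x.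
Proof. by rewrite {2}(decompose x) sqnorm_JDJq lerDl (sqnorm_ge0 hipL). Qed.

Lemma sqnormQ_le x : sqnorm ipL (Q x) <= sqnorm ip x.
Proof. by rewrite {2}(decompose x) sqnorm_JDJq lerDr (sqnorm_ge0 hipK). Qed.

Section PenalizedResolvent.
Variables (H : {linear V -> V}) (a t : R) (Rt : V -> V) (B : K -> K).
Hypotheses (hHpos : forall x, 0 <= ip (H x) x)
  (hHa : forall x, sqnorm ip (H x) <= a ^+ 2 * sqnorm ip x) (ht0 : 0 <= t).
Hypothesis hRt : forall x, H (Rt x) + t%:C *: Jq (Q (Rt x)) + Rt x = x.
Hypotheses (hB1 : forall k, B (P (H (J k)) + k) = k)
  (hB2 : forall k, P (H (J (B k))) + B k = k).

Lemma Rt_contraction x : sqnorm ip (Rt x) <= sqnorm ip x.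
Proof.
apply: (resolvent_contraction hip (T := fun y => H y + t%:C *: Jq (Q y))) hRt
  _ x.
move=> y; rewrite (ipD hip) (ipZ hip) (ip_conj hip y (Jq _)) -hQ.
by rewrite Re_ge0 // addr_ge0 ?mulr_ge0 ?conj_ge0 ?(ip_ge0 hipL) ?ler0c.
Qed.

Lemma B_contraction k : sqnorm ipK (B k) <= sqnorm ipK k.
Proof.
apply: (resolvent_contraction hipK (T := fun k => P (H (J k)))) hB2 _ k.
by move=> y; rewrite hP Re_ge0.
Qed.

Lemma B_sub c d : B c - B d = B (c - d).
Proof. by apply: resolventB hB2 _ hB1 c d => x y; rewrite !linearB. Qed.

Lemma Q_Rt x : (1 + t)%:C *: Q (Rt x) = Q (x - H (Rt x)).
Proof.
rewrite -{2}(hRt x) addrAC [H _ + _]addrC addrK linearD linearZ /= QJq.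
by rewrite raddfD /= scalerDl scale1r addrC.
Qed.

Lemma sqnormQ_Rt x :
  (1 + t) ^+ 2 * sqnorm ipL (Q (Rt x)) <= 2 * (1 + a ^+ 2) * sqnorm ip x.
Proof.
rewrite -(sqnormZ hipL) Q_Rt; apply: le_trans (sqnormQ_le _) _.
apply: le_trans (sqnormD_le hip _ _) _; rewrite (sqnormN hip).
have := ler_wpM2l (sqr_ge0 a) (Rt_contraction x); have := hHa (Rt x).
by rewrite mulrDr mulrDl; lra.
Qed.

Lemma P_Rt_sub x : P (Rt x) - B (P x) = B (- P (H (Jq (Q (Rt x))))).
Proof.
set u := Rt x; set m := P (H (Jq (Q u))).
have eP : P (H (J (P u))) + P u = P x - m.
  have hHu : H u = H (J (P u)) + H (Jq (Q u)).
    by rewrite {1}(decompose u) linearD.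
  have := congr1 P (hRt x); rewrite !linearD linearZ /= PJq scaler0 addr0 hHu.
  by rewrite linearD /= -/m => <-; rewrite addrAC addrK.
by rewrite -{1}(hB1 (P u)) eP B_sub addrAC subrr add0r.
Qed.

Lemma sqnormP_Rt_sub x :
  sqnorm ipK (P (Rt x) - B (P x)) <= a ^+ 2 * sqnorm ipL (Q (Rt x)).
Proof.
rewrite P_Rt_sub; apply: le_trans (B_contraction _) _; rewrite (sqnormN hipK).
apply: le_trans (sqnormP_le _) _; apply: le_trans (hHa _) _.
by rewrite /sqnorm hJq.
Qed.

Lemma sqnorm_Rt_sub x :
  (1 + t) ^+ 2 * sqnorm ip (Rt x - J (B (P x)))
    <= 2 * (1 + a ^+ 2) ^+ 2 * sqnorm ip x.
Proof.
have -> : Rt x - J (B (P x)) = J (P (Rt x) - B (P x)) + Jq (Q (Rt x)).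
  by rewrite {1}(decompose (Rt x)) linearB /= addrAC.
rewrite sqnorm_JDJq.
have := sqnormP_Rt_sub x; have := sqnormQ_Rt x; have := sqr_ge0 a.
have := sqr_ge0 (1 + t); have := sqnorm_ge0 hipL (Q (Rt x)); nra.
Qed.

End PenalizedResolvent.

End OrthogonalDecomposition.

Unset Implicit Arguments. Set Strict Implicit.
Theorem proposition4p2
  (R : realType)
  (* the Hilbert space \mathcal{H} *)
  (V : lmodType R[i]) (ip : V -> V -> R[i]) (hV : is_hilbert ip)
  (* the closed subspace \mathcal{H}_1, realised as a Hilbert space K together with
     the inclusion J = P^* : K -> V (an isometry); P : V -> K is its adjoint *)
  (K : lmodType R[i]) (ipK : K -> K -> R[i]) (hK : is_hilbert ipK)
  (J : {linear K -> V}) (hJ : is_isometry ipK ip J)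
  (P : {linear V -> K}) (hP : is_adjoint ip ipK P J)
  (* \mathcal{H}_1^\perp, realised as a Hilbert space L with inclusion Jq = Q^*
     whose range is exactly the orthogonal complement of the range of J;
     Q : V -> L is its adjoint *)
  (L : lmodType R[i]) (ipL : L -> L -> R[i]) (hL : is_hilbert ipL)
  (Jq : {linear L -> V}) (hJq : is_isometry ipL ip Jq)
  (hJqrange : forall x : V, (exists l : L, x = Jq l) <-> (forall k : K, ip x (J k) = 0))
  (Q : {linear V -> L}) (hQ : is_adjoint ip ipL Q Jq)
  (* {0} <> \mathcal{H}_1 <> \mathcal{H} *)
  (hK0 : exists k : K, k <> 0)
  (hKV : exists x : V, forall k : K, x <> J k)
  (* H >= 0 bounded selfadjoint *)
  (H : {linear V -> V}) (hHb : bounded_op ip ip H)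
  (hHsa : forall x y : V, ip (H x) y = ip x (H y))
  (hHpos : forall x : V, 0 <= ip (H x) x)
  (t : R) (ht0 : 0 <= t)
  (ht : 2 * (opnorm ip ip (fun x => H x + x)) ^+ 2 <= t)
  (* Rt = (H_t + 1)^{-1}, where H_t = H + t Q^* Q *)
  (Rt : V -> V)
  (hRt1 : forall x : V, Rt (H x + (real_complex R t) *: Jq (Q x) + x) = x)
  (hRt2 : forall x : V, H (Rt x) + (real_complex R t) *: Jq (Q (Rt x)) + Rt x = x)
  (* B = (P H P^* + 1)^{-1} on \mathcal{H}_1 *)
  (B : K -> K)
  (hB1 : forall k : K, B (P (H (J k)) + k) = k)
  (hB2 : forall k : K, P (H (J (B k))) + B k = k) :
  opnorm ip ip (fun x => Rt x - J (B (P x)))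
    <= 4 * (opnorm ip ip (fun x => H x + x)) ^+ 2 / (1 + t).
Proof.
have [[hip _] [hipK _] [hipL _]] := And3 hV hK hL.
set a := opnorm ip ip (fun x => H x + x).
have hHa y : sqnorm ip (H y) + sqnorm ip y <= a ^+ 2 * sqnorm ip y.
  apply: le_trans (sqnormD_ge hip (Re_ge0 (hHpos y))) _.
  apply: (sqnorm_opnorm hip hip (bounded_opD hip hip hHb (bounded_op_id ip))).
  by move=> r x; rewrite linearZ scalerDr.
have a1 : 1 <= a ^+ 2.
  have [k k0] := hK0; have Jk0 : 0 < sqnorm ip (J k).
    rewrite lt_def sqnorm_ge0 // andbT; apply: contra_not_neq k0.
    by move/(sqnorm_eq0 hip) => /(congr1 P); rewrite (PJ hipK hJ hP) linear0.
  by have := hHa (J k); have := sqnorm_ge0 hip (H (J k)); nra.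
have t1 : 0 < 1 + t by lra.
apply: opnorm_le => // [|x]; first by rewrite divr_ge0 ?ltW //; lra.
have hH y : sqnorm ip (H y) <= a ^+ 2 * sqnorm ip y.
  exact: le_trans (ler_wpDr (sqnorm_ge0 hip y) (lexx _)) (hHa y).
have hRx := sqnorm_Rt_sub hip hipK hipL hJ hP hJq hQ hJqrange hHpos hH ht0
  hRt2 hB1 hB2 x.
rewrite -(ler_pM2l (exprn_gt0 2 t1)); apply: le_trans hRx _.
rewrite [leRHS]mulrA -exprMn.
have -> : (1 + t) * (4 * a ^+ 2 / (1 + t)) = 4 * a ^+ 2.
  by rewrite mulrC divfK ?gt_eqF.
by rewrite ler_wpM2r ?sqnorm_ge0 //; nra.
Qed.
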